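(* For $i\ge0$ let $P_i(x)=\frac1{i+1}\mathrm{Tr}(x^{i+1})$ on $\mathfrak{gl}_n(\mathbb C)$ and for $\lambda\in\mathbb C$ let $\phi_\lambda(x,y)=\lambda x-y$. Then: (1) for all $i,j\ge0$ and $\lambda,\gamma\in\mathbb C$, $\{P_i\circ\phi_\lambda,P_j\circ\phi_\gamma\}^Q_{\mathcal R}=0$; (2) the Hamiltonian vector field $X^Q_{P_i\circ\phi_\lambda}$, defined by $X^Q_{P_i\circ\phi_\lambda}[K]=\{K,P_i\circ\phi_\lambda\}^Q_{\mathcal R}$, is given at $(x,y)$ by $$X^Q_{P_i\circ\phi_\lambda}(x,y)=-\big[(x,y),\big((R-I)(\lambda x-y)^{i+1},\,(R+I)(\lambda x-y)^{i+1}\big)\big].$$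
   Context: Let $P_+$ be the projection of $\mathfrak{gl}_n(\mathbb C)$ onto the upper triangular matrices (including the diagonal) and $P_-$ onto the strictly lower triangular matrices, $R=P_+-P_-$, and $\mathcal R(x,y)=(R(x-y)+y,R(x-y)+x)$ on $\mathfrak{gl}_n(\mathbb C)\times\mathfrak{gl}_n(\mathbb C)$, which carries the componentwise matrix product and commutator and the form $\langle(x,y),(x',y')\rangle_2=\mathrm{Tr}(xx')-\mathrm{Tr}(yy')$. The quadratic Poisson $\mathcal R$-bracket is $\{F,G\}^Q_{\mathcal R}(X)=\tfrac12\langle[X,\nabla_XF],\mathcal R(X\nabla_XG+\nabla_XG\,X)\rangle_2-\tfrac12\langle[X,\nabla_XG],\mathcal R(X\nabla_XF+\nabla_XF\,X)\rangle_2$ for $X=(x,y)$, gradients w.r.t. $\langle\cdot,\cdot\rangle_2$. A vector field is identified with a $\mathfrak{gl}_n\times\mathfrak{gl}_n$-valued function via $X[K]=\langle X,\nabla K\rangle_2$. *)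

(* Base field: an arbitrary numClosedFieldType C (models of C;
   the statement is polynomial, so this generalizes the paper's complex numbers). *)
From HB Require Import structures.
From mathcomp Require Import all_boot all_order all_algebra.
Set Implicit Arguments. Unset Strict Implicit. Unset Printing Implicit Defensive.
Import Order.TTheory GRing.Theory Num.Theory.
Local Open Scope ring_scope.

Section Defs.
Variables (C : numClosedFieldType) (n : nat).

Definition mx := 'M[C]_n.
Definition pt := (mx * mx)%type.

Definition Pplus (A : mx) : mx := \matrix_(i, j) (if (i <= j)%N then A i j else 0).
Definition Pminus (A : mx) : mx := \matrix_(i, j) (if (j < i)%N then A i j else 0).
Definition Rop (A : mx) : mx := Pplus A - Pminus A.

Definition calR (X : pt) : pt :=
  (Rop (X.1 - X.2) + X.2, Rop (X.1 - X.2) + X.1).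

Definition padd (X Y : pt) : pt := (X.1 + Y.1, X.2 + Y.2).
Definition pscale (t : C) (X : pt) : pt := (t *: X.1, t *: X.2).
Definition pmul (X Y : pt) : pt := (X.1 *m Y.1, X.2 *m Y.2).
Definition pcomm (X Y : pt) : pt := padd (pmul X Y) (pscale (-1) (pmul Y X)).

Definition form2 (X Y : pt) : C := \tr (X.1 *m Y.1) - \tr (X.2 *m Y.2).

(* Z is the gradient (w.r.t. form2) of F at X: for every direction H,
   t |-> F(X + t H) is a polynomial function of t whose derivative at 0
   (its coefficient of degree 1) equals <Z, H>_2. *)
Definition is_grad (F : pt -> C) (X Z : pt) : Prop :=
  forall H : pt, exists p : {poly C},
    (forall t : C, p.[t] = F (padd X (pscale t H))) /\ p`_1 = form2 Z H.

(* the quadratic bracket evaluated on gradient values A = grad F, B = grad G *)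
Definition QB (X A B : pt) : C :=
  2^-1 * form2 (pcomm X A) (calR (padd (pmul X B) (pmul B X)))
  - 2^-1 * form2 (pcomm X B) (calR (padd (pmul X A) (pmul A X))).

Definition QPB (F G : pt -> C) (X : pt) (v : C) : Prop :=
  exists ZF ZG, is_grad F X ZF /\ is_grad G X ZG /\ v = QB X ZF ZG.

Definition Pfun (i : nat) (x : mx) : C := (i.+1)%:R^-1 * \tr (x ^+ i.+1).

Definition phi (lam : C) (X : pt) : mx := lam *: X.1 - X.2.

Definition Vfield (i : nat) (lam : C) (X : pt) : pt :=
  let w := (phi lam X) ^+ i.+1 in
  pscale (-1) (pcomm X (Rop w - w, Rop w + w)).

End Defs.

From HB Require Import structures.
From mathcomp Require Import all_boot all_order all_algebra ring.
Set Implicit Arguments. Unset Strict Implicit. Unset Printing Implicit Defensive.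
Import Order.TTheory GRing.Theory Num.Theory.
Local Open Scope ring_scope.

(* Write s := lam x - y.  The gradient of P_i o phi_lam at (x, y) is
   (lam s^i, s^i); it is read off as the coefficient of t in
   Tr((a + t b)^(i+1)), computed in matrices of polynomials.  Since s^i
   commutes with s, the commutator of (x, y) with this gradient is a diagonal
   pair (c, c), c = [y, s^i].  Against diagonal pairs the two components of
   the bold R cancel in <.,.>_2, and ad-invariance of the trace form then
   turns {K, P_i o phi_lam} into <[X, grad K], ((R - I) w, (R + I) w)>_2 with
   w = s^(i+1), which is (2).  Doing this for P_j o phi_gam instead, with
   K = P_i o phi_lam, the pairing collapses to -2 Tr([y, s^i] s'^(j+1)) with
   s' = gam x - y.  The linear form a |-> Tr([a, s^i] s'^(j+1)) kills s and
   s', hence x and y when lam <> gam; when lam = gam, s^i and s'^(j+1)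
   commute.  This gives (1). *)

Section MatrixPencilTrace.
Variables (R : comNzRingType) (n : nat).
Implicit Types (a b c : 'M[R]_n) (P Q : 'M[{poly R}]_n).

Local Notation coefmx k := (map_mx (coefp k)).

Lemma mxtrace_coefmx k P : (\tr P)`_k = \tr (coefmx k P).
Proof. by rewrite coef_sum; apply: eq_bigr => i _; rewrite mxE. Qed.

Lemma coefmx1M P Q :
  coefmx 1 (P *m Q) = coefmx 0 P *m coefmx 1 Q + coefmx 1 P *m coefmx 0 Q.
Proof.
apply/matrixP=> i j; rewrite !mxE /= coef_sum -big_split; apply: eq_bigr => l _ /=.
by rewrite coefM !big_ord_recl big_ord0 /= addr0 !mxE.
Qed.

Definition mx_pencil a b : 'M[{poly R}]_n := map_mx polyC a + 'X *: map_mx polyC b.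

Lemma coefmx0_pencil a b : coefmx 0 (mx_pencil a b) = a.
Proof. by apply/matrixP=> i j; rewrite !mxE /= coefD coefC coefXM addr0. Qed.

Lemma coefmx1_pencil a b : coefmx 1 (mx_pencil a b) = b.
Proof. by apply/matrixP=> i j; rewrite !mxE /= coefD coefXM !coefC add0r. Qed.

Lemma horner_pencil t a b : map_mx (horner_eval t) (mx_pencil a b) = a + t *: b.
Proof.
apply/matrixP=> i j; rewrite !mxE /= horner_evalE hornerD mulrC hornerMX.
by rewrite !hornerC mulrC.
Qed.

Lemma coefmx0_pencilX a b k : coefmx 0 (mx_pencil a b ^+ k) = a ^+ k.
Proof. by rewrite rmorphXn; congr (_ ^+ _); apply: coefmx0_pencil. Qed.

Lemma mxtrace_coefmx1_pencilX a b c k : c *m a = a *m c ->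
  \tr (coefmx 1 (mx_pencil a b ^+ k.+1) *m c) = k.+1%:R * \tr (a ^+ k *m b *m c).
Proof.
elim: k c => [|k IHk] c ca; first by rewrite expr1 coefmx1_pencil expr0 mul1mx mul1r.
rewrite exprSr -mulmxE coefmx1M coefmx0_pencilX coefmx0_pencil coefmx1_pencil mulmxDl.
rewrite mxtraceD -[_ *m a *m c]mulmxA IHk; last by rewrite -mulmxA -ca mulmxA.
have -> : \tr (a ^+ k *m b *m (a *m c)) = \tr (a ^+ k.+1 *m b *m c).
  by rewrite -ca mulmxA mxtrace_mulC !mulmxA -[a *m a ^+ k]/(a * a ^+ k) -exprS.
by rewrite [k.+2%:R]mulrSr mulrDl mul1r addrC.
Qed.

Lemma horner_mxtrace_pencilX t a b k :
  (\tr (mx_pencil a b ^+ k)).[t] = \tr ((a + t *: b) ^+ k).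
Proof.
by rewrite -horner_evalE -trace_map_mx rmorphXn; congr (\tr (_ ^+ _)); apply: horner_pencil.
Qed.

Lemma coef1_mxtrace_pencilX a b k :
  (\tr (mx_pencil a b ^+ k.+1))`_1 = k.+1%:R * \tr (a ^+ k *m b).
Proof.
by rewrite mxtrace_coefmx -[coefmx 1 _]mulmx1 mxtrace_coefmx1_pencilX ?mulmx1 ?mul1mx.
Qed.

End MatrixPencilTrace.

Section TraceCommutator.
Variables (R : comNzRingType) (n : nat).
Implicit Types a b c x : 'M[R]_n.

Lemma mxtrace_commutator_mul a b c :
  \tr ((a *m b - b *m a) *m c) = \tr (a *m (b *m c - c *m b)).
Proof.
rewrite mulmxBl mulmxBr !raddfB /= -mulmxA; congr (_ - _).
by rewrite mxtrace_mulC mulmxA mxtrace_mulC mulmxA.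
Qed.

Lemma mxtrace_commutator_mul_eq0 a b c :
  b *m c = c *m b -> \tr ((a *m b - b *m a) *m c) = 0.
Proof. by move=> bc; rewrite mxtrace_commutator_mul bc subrr mulmx0 mxtrace0. Qed.

Lemma mxtrace_commutator_anticommutator a b x :
  \tr ((x *m b - b *m x) *m (x *m a + a *m x)) =
  - \tr ((x *m a - a *m x) *m (x *m b + b *m x)).
Proof.
rewrite !mulmxDr !mulmxBl !mxtraceD !raddfN /=.
rewrite [\tr (x *m b *m _)]mxtrace_mulC [\tr (b *m x *m _)]mxtrace_mulC.
rewrite [\tr (x *m b *m _)]mxtrace_mulC [\tr (b *m x *m _)]mxtrace_mulC.
rewrite !mulmxA [\tr (a *m x *m b *m x)]mxtrace_mulC !mulmxA.
ring.
Qed.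

End TraceCommutator.

Section PencilCommutator.
Variables (R : idomainType) (n : nat).

Lemma mxtrace_commutator_pencilX (lam gam : R) (x y : 'M[R]_n) i j :
  \tr ((y *m (lam *: x - y) ^+ i - (lam *: x - y) ^+ i *m y) *m (gam *: x - y) ^+ j)
  = 0.
Proof.
set s := lam *: x - y; set u := s ^+ i; set s' := gam *: x - y; set v := s' ^+ j.
pose f a := \tr ((a *m u - u *m a) *m v).
have fZB c a b : f (c *: a - b) = c * f a - f b.
  rewrite /f !mulmxBl !mulmxBr -!scalemxAl -!scalemxAr !mulmxBl !raddfB /=.
  by rewrite -!scalemxAl !mxtraceZ; ring.
have su : s *m u = u *m s := commrX i (commr_refl s).
have s'v : s' *m v = v *m s' := commrX j (commr_refl s').
have fs : f s = 0 by rewrite /f su subrr mul0mx mxtrace0.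
have fs' : f s' = 0.
  by rewrite /f -[s' *m u - _]opprB mulNmx raddfN /= mxtrace_commutator_mul_eq0 ?oppr0.
have [lam_gam|lam_gam] := eqVneq lam gam.
  apply: mxtrace_commutator_mul_eq0; rewrite /v /s' -lam_gam -/s.
  exact: commrX j (commr_sym (commrX i (commr_refl s))).
have fx : f x = 0.
  have : (lam - gam) * f x = f s - f s' by rewrite /s /s' !fZB; ring.
  by rewrite fs fs' subrr => /eqP; rewrite mulf_eq0 subr_eq0 (negPf lam_gam) => /eqP.
have := fZB lam x y; rewrite -/s fs fx mulr0 sub0r => /eqP.
by rewrite eq_sym oppr_eq0 => /eqP.
Qed.

End PencilCommutator.

Section Bracket.
Variables (C : numClosedFieldType) (n : nat).
Implicit Types (X Y Z A B : pt C n) (a b c w : 'M[C]_n).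

Lemma pcommE X A :
  pcomm X A = (X.1 *m A.1 - A.1 *m X.1, X.2 *m A.2 - A.2 *m X.2).
Proof. by rewrite /pcomm /padd /pscale /pmul /= !scaleN1r. Qed.

Lemma form2C X Y : form2 X Y = form2 Y X.
Proof. by rewrite /form2 mxtrace_mulC [\tr (X.2 *m _)]mxtrace_mulC. Qed.

Lemma form2N1l X Y : form2 (pscale (-1) X) Y = - form2 X Y.
Proof. by rewrite /form2 /= !scaleN1r !mulNmx !raddfN /= opprD. Qed.

Lemma RopD a b : Rop (a + b) = Rop a + Rop b.
Proof.
apply/matrixP=> i j; rewrite !mxE.
by case: leqP => _; rewrite ?subr0 ?sub0r ?opprD.
Qed.

Lemma form2_pcomm X A Y : form2 (pcomm X A) Y = - form2 A (pcomm X Y).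
Proof.
rewrite !pcommE /form2 /= -[X.1 *m A.1 - _]opprB -[X.2 *m A.2 - _]opprB.
by rewrite !mulNmx !raddfN /= !mxtrace_commutator_mul opprD.
Qed.

Lemma form2_pcomm_anticomm X A B :
  form2 (pcomm X B) (padd (pmul X A) (pmul A X)) =
  - form2 (pcomm X A) (padd (pmul X B) (pmul B X)).
Proof.
rewrite !pcommE /form2 /= (@mxtrace_commutator_anticommutator _ _ A.1).
by rewrite (@mxtrace_commutator_anticommutator _ _ A.2) opprD.
Qed.

Lemma form2_diag_calR c Z : form2 (c, c) (calR Z) = - form2 (c, c) Z.
Proof. rewrite /form2 /calR /= !mulmxDr !mxtraceD; ring. Qed.

Lemma QB_pcomm_diag X A B c : pcomm X B = (c, c) ->
  let Z := padd (pmul X B) (pmul B X) in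
  QB X A B = 2^-1 * (form2 (pcomm X A) (calR Z) - form2 (pcomm X A) Z).
Proof. by move=> hB Z; rewrite /QB hB form2_diag_calR -hB form2_pcomm_anticomm; ring. Qed.

Lemma form2_calR_sub Y P Q w : P - Q = w + w ->
  form2 Y (calR (P, Q)) - form2 Y (P, Q) = 2 * form2 Y (Rop w - w, Rop w + w).
Proof.
move=> PQ; rewrite /form2 /calR /= PQ RopD.
rewrite (_ : P = Q + (w + w)); last by rewrite -PQ addrC subrK.
rewrite !mulmxDr !mulmxN !mxtraceD !raddfN /=; ring.
Qed.

Lemma pcomm_diag lam X u : phi lam X *m u = u *m phi lam X ->
  pcomm X (lam *: u, u) = (X.2 *m u - u *m X.2, X.2 *m u - u *m X.2).
Proof.
move=> su; rewrite pcommE /=; congr (_, _).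
have -> : X.1 *m (lam *: u) - (lam *: u) *m X.1 = (lam *: X.1) *m u - u *m (lam *: X.1).
  by rewrite -!scalemxAr -!scalemxAl.
rewrite -[lam *: X.1](subrK X.2).
by rewrite mulmxDl mulmxDr su opprD addrACA subrr add0r.
Qed.

Lemma QB_pencil_grad lam X A u : phi lam X *m u = u *m phi lam X ->
  let w := phi lam X *m u in
  QB X A (lam *: u, u) = form2 (pcomm X A) (Rop w - w, Rop w + w).
Proof.
move=> su w; rewrite (QB_pcomm_diag _ (pcomm_diag su)) (form2_calR_sub _ (w := w)).
  by rewrite mulKf ?pnatr_eq0.
rewrite /padd /pmul /=.
have -> : X.1 *m (lam *: u) + (lam *: u) *m X.1 = (lam *: X.1) *m u + u *m (lam *: X.1).
  by rewrite -!scalemxAr -!scalemxAl.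
by rewrite opprD addrACA -mulmxBl -mulmxBr -su.
Qed.

Lemma phi_padd_pscale lam X H t :
  phi lam (padd X (pscale t H)) = phi lam X + t *: phi lam H.
Proof.
rewrite /phi /padd /pscale /= scalerDr scalerA mulrC -scalerA scalerBr.
by rewrite opprD addrACA.
Qed.

Lemma is_grad_Pfun_phi i lam X :
  is_grad (fun Y => Pfun i (phi lam Y)) X (lam *: phi lam X ^+ i, phi lam X ^+ i).
Proof.
move=> H; exists ((i.+1%:R^-1)%:P * \tr (mx_pencil (phi lam X) (phi lam H) ^+ i.+1)).
split=> [t|]; first by rewrite hornerCM horner_mxtrace_pencilX /Pfun phi_padd_pscale.
rewrite coefCM coef1_mxtrace_pencilX mulKf ?pnatr_eq0 //.
by rewrite /form2 /phi /= -scalemxAl mxtraceZ mulmxBr raddfB /= -scalemxAr mxtraceZ.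
Qed.

Lemma form2_diag_sub_add c r w : form2 (c, c) (r - w, r + w) = - (\tr (c *m w) *+ 2).
Proof. rewrite /form2 /= mulmxBr mulmxDr raddfB mxtraceD /=; ring. Qed.

End Bracket.

Theorem proposition3p13 (C : numClosedFieldType) (n : nat) :
  (forall (i j : nat) (lam gam : C) (X : pt C n),
      QPB (fun Y => Pfun i (phi lam Y)) (fun Y => Pfun j (phi gam Y)) X 0)
  /\
  (forall (i : nat) (lam : C) (K : pt C n -> C) (X ZK : pt C n),
      is_grad K X ZK ->
      QPB K (fun Y => Pfun i (phi lam Y)) X (form2 (Vfield i lam X) ZK)).
Proof.
have phi_commX lam (X : pt C n) i :
  phi lam X *m phi lam X ^+ i = phi lam X ^+ i *m phi lam X.
  exact: commrX i (commr_refl _).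
have phi_mulX lam (X : pt C n) i : phi lam X *m phi lam X ^+ i = phi lam X ^+ i.+1.
  exact: esym (exprS _ i).
split=> [i j lam gam X | i lam K X ZK gradK].
  do 2!eexists; split; [exact: is_grad_Pfun_phi | split; first exact: is_grad_Pfun_phi].
  rewrite QB_pencil_grad // pcomm_diag // form2_diag_sub_add phi_mulX /phi.
  by rewrite mxtrace_commutator_pencilX mul0rn oppr0.
exists ZK; eexists; split=> //; split; first exact: is_grad_Pfun_phi.
by rewrite QB_pencil_grad // phi_mulX /Vfield form2N1l form2_pcomm form2C opprK.
Qed.
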